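(* Let $G=(V,E)$ be a $d$-regular graph on $n$ vertices with adjacency matrix $A$, and let $D = d\cdot I_n$. Let $\{\phi_1,\dots,\phi_n\}\subset\mathbb{R}^n$ be an orthonormal basis of eigenvectors of the symmetric matrix $AD^{-1}$, where $\phi_j$ has eigenvalue $\lambda_j$, the eigenvalues are ordered as $1=\lambda_1 \geq |\lambda_2| \geq \dots \geq |\lambda_n|\geq 0$, and $\phi_1 = \frac{1}{\sqrt n}(1,1,\dots,1)$. Then for every $2 \leq \ell \leq n-1$ there exists a vector $0 \neq w \in \mathbb{R}^n_{\geq 0}$ such that (1) $w$ has at most $\ell$ nonzero entries, and (2) $\langle \phi_j, w\rangle = 0$ for all $2 \leq j \leq \ell$.
   Context: $\langle\cdot,\cdot\rangle$ denotes the standard inner product on $\mathbb{R}^n$, and vectors in $\mathbb{R}^n$ are indexed by the vertices of $G$. *)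

From HB Require Import structures.
From mathcomp Require Import all_boot all_order all_algebra.
Set Implicit Arguments. Unset Strict Implicit. Unset Printing Implicit Defensive.
Import Order.TTheory GRing.Theory Num.Theory.
Local Open Scope ring_scope.

Definition simple_graph (n : nat) (e : rel 'I_n) : Prop :=
  (forall i j, e i j = e j i) /\ (forall i, ~~ e i i).

Definition regular (n : nat) (e : rel 'I_n) (d : nat) : Prop :=
  forall i, #|[set j | e i j]| = d.

Definition adjmx (R : nzRingType) (n : nat) (e : rel 'I_n) : 'M[R]_n :=
  \matrix_(i, j) (e i j)%:R.

Definition dotv (R : nzRingType) (n : nat) (u v : 'cV[R]_n) : R :=
  \sum_(k < n) u k ord0 * v k ord0.

From HB Require Import structures.
From mathcomp Require Import all_boot all_order all_algebra.
Set Implicit Arguments. Unset Strict Implicit. Unset Printing Implicit Defensive.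
Import Order.TTheory GRing.Theory Num.Theory.
Local Open Scope ring_scope.

(* The all-ones vector is a multiple of phi_1, so it is a nonnegative vector
   orthogonal to phi_2, ..., phi_l.  A Caratheodory-type descent then shrinks
   its support: while a nonnegative solution w of these l - 1 linear equations
   has more than l nonzero entries, some nonzero x supported inside supp w is
   orthogonal to phi_1, ..., phi_l; such an x sums to 0, hence has a positive
   entry, and w - t x for the largest admissible t >= 0 is again a nonnegative
   nonzero solution, with at least one more zero entry. *)

Definition supp (R : nzRingType) (n : nat) (w : 'cV[R]_n) : {set 'I_n} :=
  [set k | w k ord0 != 0].

Lemma dotvZr (R : comNzRingType) n (u v : 'cV[R]_n) c :
  dotv u (c *: v) = c * dotv u v.
Proof. by rewrite /dotv mulr_sumr; apply: eq_bigr => k _; rewrite mxE mulrCA. Qed.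

Lemma mul_rows_mx (R : nzRingType) m n (u : 'I_m -> 'cV[R]_n) (w : 'cV_n) j :
  ((\matrix_(i, k) u i k ord0) *m w) j ord0 = dotv (u j) w.
Proof. by rewrite mxE; apply: eq_bigr => k _; rewrite mxE. Qed.

Section Kernel.
Variable F : fieldType.

Lemma wide_mx_kernel p q (B : 'M[F]_(p, q)) :
  (p < q)%N -> exists2 y : 'cV_q, y != 0 & B *m y = 0.
Proof.
move=> lt_pq; have : kermx B^T != 0.
  rewrite -mxrank_eq0 mxrank_ker mxrank_tr subn_eq0 -ltnNge.
  exact: leq_ltn_trans (rank_leq_row B) lt_pq.
case/rowV0Pn => v /sub_kermxP vB0 v_nz; exists v^T; first by rewrite trmx_eq0.
by apply: trmx_inj; rewrite trmx_mul trmxK vB0 trmx0.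
Qed.

Lemma kernel_vector_in_support p n (A : 'M[F]_(p, n)) (S : {set 'I_n}) :
  (p < #|S|)%N ->
  exists x : 'cV_n, [/\ x != 0, forall k, k \notin S -> x k ord0 = 0 & A *m x = 0].
Proof.
move=> lt_pS; pose P : 'M[F]_(n, #|S|) := colsub enum_val 1%:M.
have Px (y : 'cV_#|S|) k :
    (P *m y) k ord0 = \sum_i (k == enum_val i)%:R * y i ord0.
  by rewrite mxE; apply: eq_bigr => i _; rewrite !mxE.
have [y y_nz APy] := wide_mx_kernel (A *m P) lt_pS.
exists (P *m y); split; last by rewrite mulmxA.
- have [i yi] : exists i, y i ord0 != 0.
    apply/existsP; apply: contraR y_nz => /existsPn y0.
    by apply/eqP/colP => i; rewrite mxE; apply/eqP/negbNE.
  apply: contraNneq yi => /colP/(_ (enum_val i)); rewrite Px mxE => <-.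
  rewrite (bigD1 i) //= eqxx mul1r big1 ?addr0 // => j ji.
  by rewrite (inj_eq enum_val_inj) eq_sym (negbTE ji) mul0r.
- move=> k kS; rewrite Px big1 // => i _; case: eqP => [ki|_]; last by rewrite mul0r.
  by move: kS; rewrite ki enum_valP.
Qed.

End Kernel.

Section Caratheodory.
Variables (R : realFieldType) (m n : nat) (F : 'M[R]_(m, n)).

Lemma sumr_col_gt0 (w : 'cV[R]_n) :
  (forall k, 0 <= w k ord0) -> w != 0 -> 0 < \sum_k w k ord0.
Proof.
move=> w_ge0 w_nz; rewrite lt_def sumr_ge0 ?andbT //.
apply: contraNneq w_nz => s0; apply/eqP/colP => k.
by rewrite mxE (psumr_eq0P (fun k _ => w_ge0 k) s0).
Qed.

Lemma sum0_col_pos_entry (x : 'cV[R]_n) :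
  x != 0 -> \sum_k x k ord0 = 0 -> exists k, 0 < x k ord0.
Proof.
move=> x_nz sx0; apply/existsP; apply: contraR x_nz => /existsPn x_le0.
have Nx_ge0 k : 0 <= - x k ord0 by rewrite oppr_ge0 leNgt x_le0.
have sNx0 : \sum_k - x k ord0 = 0 by rewrite sumrN sx0 oppr0.
apply/eqP/colP => k.
by rewrite mxE -[LHS]opprK (psumr_eq0P (fun k _ => Nx_ge0 k) sNx0) ?oppr0.
Qed.

Lemma nonneg_solution_shrink_support (w : 'cV[R]_n) :
  (forall k, 0 <= w k ord0) -> w != 0 -> F *m w = 0 ->
  (m.+1 < #|supp w|)%N ->
  exists w' : 'cV_n, [/\ forall k, 0 <= w' k ord0, w' != 0, F *m w' = 0
                       & (#|supp w'| < #|supp w|)%N].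
Proof.
move=> w_ge0 w_nz Fw0 big_supp.
have [x [x_nz x_out /eqP]] :=
  kernel_vector_in_support (col_mx (const_mx 1 : 'rV_n) F) big_supp.
rewrite mul_col_mx col_mx_eq0 => /andP[/eqP/colP/(_ ord0) sx0 /eqP Fx0].
have {}sx0 : \sum_k x k ord0 = 0.
  by move: sx0; rewrite !mxE; under eq_bigr do rewrite mxE mul1r.
have [k1 x_k1] := sum0_col_pos_entry x_nz sx0.
(* [t] is the largest step keeping [w - t *: x] nonnegative. *)
pose k0 := [arg min_(k < k1 | 0 < x k ord0) (w k ord0 / x k ord0)]%O.
have [x_k0 k0_min] : 0 < x k0 ord0 /\
    forall k, 0 < x k ord0 -> w k0 ord0 / x k0 ord0 <= w k ord0 / x k ord0.
  by rewrite /k0; case: arg_minP => // i x_i i_min; split => // k /i_min.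
set t := w k0 ord0 / x k0 ord0.
have t_ge0 : 0 <= t by rewrite divr_ge0 // ltW.
have w'E k : (w - t *: x) k ord0 = w k ord0 - t * x k ord0 by rewrite !mxE.
exists (w - t *: x); split.
- move=> k; rewrite w'E subr_ge0; case: (ltP 0 (x k ord0)) => x_k.
    by rewrite -ler_pdivlMr //; apply: k0_min.
  by apply: le_trans (w_ge0 k); rewrite mulr_ge0_le0.
- have sum_w' : \sum_k (w - t *: x) k ord0 = \sum_k w k ord0.
    by under eq_bigr do rewrite w'E; rewrite sumrB -mulr_sumr sx0 mulr0 subr0.
  apply: contraTneq (sumr_col_gt0 w_ge0 w_nz) => w'0.
  by rewrite -sum_w' w'0 big1 ?ltxx // => k _; rewrite mxE.
- by rewrite mulmxBr -scalemxAr Fw0 Fx0 scaler0 subrr.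
- have k0_supp : k0 \in supp w.
    by apply: contraLR x_k0 => /x_out ->; rewrite ltxx.
  rewrite [X in (_ < X)%N](cardsD1 k0) k0_supp add1n ltnS.
  apply/subset_leq_card/subsetP => k; rewrite !inE w'E.
  apply: contraNT; rewrite negb_and negbK => /orP[/eqP -> | /negPn/eqP w_k0].
    by rewrite /t divfK ?subrr // gt_eqF.
  by rewrite w_k0 x_out ?inE ?w_k0 ?eqxx // mulr0 subrr.
Qed.

Lemma nonneg_solution_small_support (w : 'cV[R]_n) :
  (forall k, 0 <= w k ord0) -> w != 0 -> F *m w = 0 ->
  exists w' : 'cV_n, [/\ forall k, 0 <= w' k ord0, w' != 0, F *m w' = 0
                       & (#|supp w'| <= m.+1)%N].
Proof.
have [N] := ubnP #|supp w|; elim: N w => // N IH w supp_w w_ge0 w_nz Fw0.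
have [small | big] := leqP #|supp w| m.+1; first by exists w.
have [w' [w'_ge0 w'_nz Fw'0 lt_supp]] :=
  nonneg_solution_shrink_support w_ge0 w_nz Fw0 big.
exact: IH (leq_trans lt_supp _) w'_ge0 w'_nz Fw'0.
Qed.

End Caratheodory.

Theorem lemma2 (R : rcfType) (n d : nat) (e : rel 'I_n)
  (phi : 'I_n -> 'cV[R]_n) (lambda : 'I_n -> R) :
  simple_graph e ->
  regular e d ->
  (0 < d)%N ->
  (forall i j : 'I_n, dotv (phi i) (phi j) = (i == j)%:R) ->
  (forall j : 'I_n,
     (adjmx R e *m invmx (d%:R%:M : 'M[R]_n)) *m phi j = lambda j *: phi j) ->
  (forall i : 'I_n, val i = 0%N -> lambda i = 1) ->
  (forall i j : 'I_n, (i <= j)%N -> `|lambda j| <= `|lambda i|) ->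
  (forall i : 'I_n, val i = 0%N ->
     phi i = (Num.sqrt (n%:R))^-1 *: const_mx 1) ->
  forall l : nat, (2 <= l <= n.-1)%N ->
  exists w : 'cV[R]_n,
    [/\ w != 0,
        (forall k, 0 <= w k ord0),
        (#|[set k | w k ord0 != 0%R]| <= l)%N &
        (forall j : 'I_n, (1 <= j <= l.-1)%N -> dotv (phi j) w = 0)].
Proof.
move=> _ _ _ orth _ _ _ phi0 l /andP[l2 ln].
clear e lambda; case: n phi orth phi0 ln => [|n] phi orth phi0 ln.
  by rewrite leqn0 in ln; rewrite (eqP ln) in l2.
have ml : l.-1.+1 = l by rewrite prednK // (leq_trans _ l2).
have c_gt0 : 0 < (Num.sqrt (n.+1%:R : R))^-1 by rewrite invr_gt0 sqrtr_gt0 ltr0n.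
have phi_ones (i : 'I_n.+1) : i != ord0 -> dotv (phi i) (const_mx 1) = 0.
  move=> i_nz; have := orth i ord0; rewrite (negbTE i_nz) (phi0 ord0) // dotvZr.
  by move/eqP; rewrite mulf_eq0 gt_eqF //= => /eqP.
pose Phi : 'M[R]_(l.-1, n.+1) := \matrix_(j, k) phi (inord j.+1) k ord0.
have Phi1 : Phi *m (const_mx 1 : 'cV_n.+1) = 0.
  apply/colP => j; have jn : (j.+1 < n.+1)%N.
    by rewrite ltnS; apply: leq_trans ln; apply: leq_trans (ltn_ord j) (leq_pred l).
  by rewrite mul_rows_mx mxE phi_ones // -val_eqE /= inordK.
have ones_ge0 k : 0 <= (const_mx 1 : 'cV[R]_n.+1) k ord0 by rewrite mxE.
have ones_nz : (const_mx 1 : 'cV[R]_n.+1) != 0.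
  by apply/eqP => /colP/(_ ord0); rewrite !mxE; apply/eqP; rewrite oner_eq0.
have [w [w_ge0 w_nz Phiw supp_w]] :=
  nonneg_solution_small_support ones_ge0 ones_nz Phi1.
exists w; split => //; first by rewrite -ml.
move=> j /andP[j_gt0 jl]; have jl' : (j.-1 < l.-1)%N by rewrite prednK.
have -> : j = inord (Ordinal jl').+1 by apply: val_inj; rewrite /= prednK ?inordK.
by move/colP: Phiw => /(_ (Ordinal jl')); rewrite mul_rows_mx mxE.
Qed.
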